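(* Consider the self-attention dynamics with LayerNorm, $X^{(t+1)}=D^{(t)}A^{(t)}X^{(t)}W_V^{(t)}$, with initial input $X^{(0)}\in\mathbb{R}^{N\times d}$ whose rows have unit Euclidean norm. Let $\mathcal{G}$ be quasi-strongly connected with radius $r$ and assume \textbf{A1} and \textbf{A2}. If $W_V^{(t)}$ is orthogonal for all $t\ge0$ and $\phi^{(0)}\ge 0$, then there exist $C>0$ and $\epsilon>0$ with $N\epsilon<1$ such that $$\mu(X^{(t)})\le C\,(1-\epsilon^{2r})^{t/(2r)}\qquad\text{for all }t\ge0,$$ i.e. all tokens converge exponentially to a common point of $\mathbb{S}^{d-1}$.
   Context: Tokens are the rows of $X\in\mathbb{R}^{N\times d}$. Attention mask: directed graph $\mathcal{G}$ on $[N]$, with $(j,i)\in E(\mathcal{G})$ meaning token $i$ attends to token $j$; $\mathcal{N}_i=\{k:(k,i)\in E(\mathcal{G})\}$. Masked softmax: $\mathrm{softmax}_{\mathcal{G}}(R)_{ij}=\exp(R_{ij})/\sum_{k\in\mathcal{N}_i}\exp(R_{ik})$ if $(j,i)\in E(\mathcal{G})$, else $0$. $A^{(t)}=\mathrm{softmax}_{\mathcal{G}}\big(X^{(t)}W_Q^{(t)}(X^{(t)}W_K^{(t)})^\top/\sqrt{d_{QK}}\big)$ with fixed $d_{QK}>0$. $D^{(t)}=\mathrm{diag}(d_1,\dots,d_N)$, $d_i=1/\|(A^{(t)}X^{(t)}W_V^{(t)})_{i,:}\|_2$. \textbf{A1}: $(i,i)\in E(\mathcal{G})$ for all $i$. \textbf{A2}: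 $\sup_t\max\{\|W_Q^{(t)}\|_2,\|W_K^{(t)}\|_2\}<\infty$. $\mu(X)=\|X-\mathbf{1}\mathbf{1}^\top X/N\|_F$. $\phi^{(t)}=\min_{i,j\in[N]}\langle X^{(t)}_{i,:},X^{(t)}_{j,:}\rangle$. A center node is a node from which every node is reachable by a directed path; $\mathcal{G}$ is quasi-strongly connected if it has a center node; its radius is $\min_{c\text{ center}}\max_v\mathrm{dist}(c,v)$, where $\mathrm{dist}(u,v)$ is the length of a shortest directed path from $u$ to $v$. *)

From HB Require Import structures.
From mathcomp Require Import all_boot all_order all_algebra.
From mathcomp Require Import all_classical all_reals all_analysis.
Set Implicit Arguments. Unset Strict Implicit. Unset Printing Implicit Defensive.
Import Order.TTheory GRing.Theory Num.Theory.
Local Open Scope ring_scope.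
Local Open Scope classical_set_scope.

Section Defs.
Variable R : realType.

Definition vnorm n (v : 'rV[R]_n) : R := Num.sqrt (\sum_j v 0 j ^+ 2).

Definition opnorm2 m n (W : 'M[R]_(m, n)) : R :=
  sup [set vnorm (v *m W) | v in [set v : 'rV[R]_m | vnorm v = 1]].

(* Graph on [N]: E j i = true means (j,i) is an edge, i.e. token i attends to j. *)
Definition softmaxG N (E : rel 'I_N) (M : 'M[R]_N) : 'M[R]_N :=
  \matrix_(i, j) (if E j i then expR (M i j) / \sum_(k | E k i) expR (M i k)
                  else 0).

Definition attn N d dQK (E : rel 'I_N) (X : 'M[R]_(N, d))
  (WQ WK : 'M[R]_(d, dQK)) : 'M[R]_N :=
  softmaxG E ((Num.sqrt (dQK%:R))^-1 *: ((X *m WQ) *m (X *m WK)^T)).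

Definition sa_ln_step N d dQK (E : rel 'I_N) (X : 'M[R]_(N, d))
  (WQ WK : 'M[R]_(d, dQK)) (WV : 'M[R]_d) : 'M[R]_(N, d) :=
  let Y := attn E X WQ WK *m X *m WV in
  diag_mx (\row_i (vnorm (row i Y))^-1) *m Y.

Definition mu N d (X : 'M[R]_(N, d)) : R :=
  Num.sqrt (\sum_i \sum_j (X i j - (\sum_k X k j) / N%:R) ^+ 2).

Definition rowdot N d (X : 'M[R]_(N, d)) (i j : 'I_N) : R :=
  \sum_k X i k * X j k.

End Defs.

Definition walk N (E : rel 'I_N) (u v : 'I_N) (k : nat) : Prop :=
  exists p : seq 'I_N, size p = k /\ path E u p /\ last u p = v.
Definition reachable N (E : rel 'I_N) u v : Prop := exists k, walk E u v k.
Definition is_dist N (E : rel 'I_N) u v (k : nat) : Prop :=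
  walk E u v k /\ forall k', walk E u v k' -> (k <= k')%N.
Definition center N (E : rel 'I_N) c : Prop := forall v, reachable E c v.
Definition quasi_strongly_connected N (E : rel 'I_N) : Prop :=
  exists c, center E c.
Definition is_ecc N (E : rel 'I_N) c (e : nat) : Prop :=
  center E c /\ (forall v k, is_dist E c v k -> (k <= e)%N) /\
  exists v, is_dist E c v e.
Definition is_radius N (E : rel 'I_N) (r : nat) : Prop :=
  (exists c, is_ecc E c r) /\ forall c e, is_ecc E c e -> (r <= e)%N.

From HB Require Import structures.
From mathcomp Require Import all_boot all_order all_algebra.
From mathcomp Require Import all_classical all_reals all_analysis.
From mathcomp Require Import ring lra.
Import Order.TTheory GRing.Theory Num.Theory.
Set Implicit Arguments. Unset Strict Implicit. Unset Printing Implicit Defensive.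
Local Open Scope ring_scope.

(* Let S_t(i,k) = 1 - <x_i, x_k> measure the disagreement of the unit-norm tokens.
   As W_V is orthogonal, the Gram matrix of A X W_V is A G A^T, so before LayerNorm the
   disagreement of (i,k) is the A(x)A-average of S_t; since the inner products stay
   nonnegative and the new row norms are at most 1, normalising only decreases it.
   Bounded query/key weights bound the scores, so every edge of the graph carries
   attention at least eps.  Following walks of length r from a center (padded with
   self-loops) to i and to k, each step transfers an eps^2 share of the slack, so after
   r steps sup S has shrunk by the factor 1 - eps^(2r).  Finally
   mu(X)^2 = (sum_{i,k} S(i,k)) / N <= N sup S. *)
Section Gram.
Variable R : realType.

Lemma ler_sum_term (I : finType) (F : I -> R) j :
  (forall i, 0 <= F i) -> F j <= \sum_i F i.
Proof.
by move=> F_ge0; rewrite (bigD1 j) //= lerDl; apply: sumr_ge0 => i _.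
Qed.

Lemma sqrtr_eq1 (x : R) : Num.sqrt x = 1 -> x = 1.
Proof.
have [x_ge0 sx1|x_lt0] := leP 0 x; first by rewrite -(sqr_sqrtr x_ge0) sx1 expr1n.
by rewrite ltr0_sqrtr // => /eqP; rewrite eq_sym oner_eq0.
Qed.

Lemma normr_dot_le n (p q : 'I_n -> R) :
  2 * `|\sum_j p j * q j| <= \sum_j p j * p j + \sum_j q j * q j.
Proof.
have sqD : 0 <= \sum_j (p j - q j) ^+ 2 by apply: sumr_ge0 => j _; apply: sqr_ge0.
have sqS : 0 <= \sum_j (p j + q j) ^+ 2 by apply: sumr_ge0 => j _; apply: sqr_ge0.
have eD : \sum_j (p j - q j) ^+ 2
    = \sum_j p j * p j + \sum_j q j * q j - 2 * \sum_j p j * q j.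
  by rewrite mulr_sumr -big_split -sumrB; apply: eq_bigr => j _ /=; ring.
have eS : \sum_j (p j + q j) ^+ 2
    = \sum_j p j * p j + \sum_j q j * q j + 2 * \sum_j p j * q j.
  by rewrite mulr_sumr -!big_split; apply: eq_bigr => j _ /=; ring.
rewrite eD in sqD; rewrite eS in sqS.
have : `|\sum_j p j * q j| <= (\sum_j p j * p j + \sum_j q j * q j) / 2.
  by rewrite ler_norml; apply/andP; split; lra.
lra.
Qed.

Variables N d : nat.
Implicit Types X : 'M[R]_(N, d).

Lemma vnorm_row X i : vnorm (row i X) = Num.sqrt (rowdot X i i).
Proof. by congr Num.sqrt; apply: eq_bigr => j _; rewrite mxE expr2. Qed.

Lemma rowdot_gram X i k : rowdot X i k = (X *m X^T) i k.
Proof. by rewrite mxE; apply: eq_bigr => j _; rewrite mxE. Qed.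

Lemma rowdot_diag_ge0 X i : 0 <= rowdot X i i.
Proof. by apply: sumr_ge0 => j _; rewrite -expr2 sqr_ge0. Qed.

Lemma rowdot_le1 X i k :
  rowdot X i i = 1 -> rowdot X k k = 1 -> rowdot X i k <= 1.
Proof.
move=> Xi1 Xk1; have := normr_dot_le (fun j => X i j) (fun j => X k j).
rewrite -/(rowdot X i k) -/(rowdot X i i) -/(rowdot X k k) Xi1 Xk1.
have := ler_norm (rowdot X i k); lra.
Qed.

End Gram.

Section Stochastic.
Variables (R : realType) (N : nat).

Definition stochastic (A : 'M[R]_N) :=
  (forall i j, 0 <= A i j) /\ (forall i, \sum_j A i j = 1).

Lemma sum_row_products_eq1 (A : 'M[R]_N) i k :
  (forall i, \sum_j A i j = 1) -> \sum_j \sum_l A i j * A k l = 1.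
Proof.
move=> A1; rewrite -[RHS]mul1r -{1}(A1 i) -(A1 k) mulr_suml.
by apply: eq_bigr => j _; rewrite mulr_sumr.
Qed.

Variable E : rel 'I_N.

Lemma softmaxG_stochastic (M : 'M[R]_N) :
  (forall i, E i i) -> stochastic (softmaxG E M).
Proof.
move=> Eii; have Z_gt0 i : 0 < \sum_(k | E k i) expR (M i k).
  rewrite (bigD1 i) //=; apply: ltr_pwDl; first exact: expR_gt0.
  by apply: sumr_ge0 => k _; apply: expR_ge0.
split=> [i j|i]; rewrite ?mxE.
  by case: (E j i) => //; rewrite divr_ge0 ?expR_ge0 ?ltW.
under eq_bigr do rewrite mxE.
by rewrite -big_mkcond /= -mulr_suml divff // lt0r_neq0.
Qed.

Lemma softmaxG_floor (M : 'M[R]_N) B i j :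
  (forall i j, `|M i j| <= B) -> E j i ->
  expR (- (B + B)) / N%:R <= softmaxG E M i j.
Proof.
move=> MB Eji; rewrite mxE Eji.
have N_gt0 : (0 : R) < N%:R by rewrite ltr0n (leq_ltn_trans _ (ltn_ord i)).
set Z := \sum_(k | E k i) _.
have Z_gt0 : 0 < Z.
  rewrite /Z (bigD1 j) //=; apply: ltr_pwDl; first exact: expR_gt0.
  by apply: sumr_ge0 => k _; apply: expR_ge0.
have Z_le : Z <= N%:R * expR B.
  apply: (@le_trans _ _ (\sum_(k | E k i) expR B)).
    by apply: ler_sum => k _; rewrite ler_expR; have /ler_normlP[] := MB i k.
  rewrite sumr_const -[_ *+ _]mulr_natl ler_pM2r ?expR_gt0 // ler_nat.
  by apply: leq_trans (max_card _) _; rewrite card_ord.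
have Mij_ge : expR (- B) <= expR (M i j).
  by rewrite ler_expR; have /ler_normlP[] := MB i j; rewrite lerNl.
rewrite ler_pdivlMr // opprD expRD.
apply: (@le_trans _ _ (expR (- B) * expR (- B) / N%:R * (N%:R * expR B))).
  by rewrite ler_wpM2l // divr_ge0 ?mulr_ge0 ?expR_ge0 ?ltW.
have -> : expR (- B) * expR (- B) / N%:R * (N%:R * expR B) = expR (- B).
  by rewrite expRN; field; rewrite !lt0r_neq0 ?expR_gt0.
exact: Mij_ge.
Qed.

End Stochastic.

Lemma vnorm_mulmx_le_opnorm2 (R : realType) m n (W : 'M[R]_(m, n)) (v : 'rV_m) :
  vnorm v = 1 -> vnorm (v *m W) <= opnorm2 W.
Proof.
move=> v1; apply: sup_upper_bound; last by exists v.
split; first by exists (vnorm (v *m W)); exists v.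
exists (Num.sqrt (\sum_j (\sum_i `|W i j|) ^+ 2)) => _ [u /= u1 <-].
apply: ler_wsqrtr; apply: ler_sum => j _.
have u_le1 i : `|u 0 i| <= 1.
  have : u 0 i ^+ 2 <= 1.
    rewrite -(sqrtr_eq1 u1).
    by apply: (ler_sum_term (F := fun k => u 0 k ^+ 2)) => k; apply: sqr_ge0.
  by move=> ui2; rewrite ler_norml; apply/andP; split; nra.
have uWj : `|(u *m W) 0 j| <= \sum_i `|W i j|.
  rewrite mxE; apply: (le_trans (ler_norm_sum _ _ _)); apply: ler_sum => i _.
  by rewrite normrM -[leRHS]mul1r ler_wpM2r.
have := normr_ge0 ((u *m W) 0 j).
rewrite -real_normK ?num_real // !expr2; nra.
Qed.

Lemma attn_score_bound (R : realType) N d dQK (X : 'M[R]_(N, d))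
    (WQ WK : 'M[R]_(d, dQK)) M :
  (forall i, rowdot X i i = 1) -> opnorm2 WQ <= M -> opnorm2 WK <= M ->
  forall i j, `|((Num.sqrt dQK%:R)^-1 *: ((X *m WQ) *m (X *m WK)^T)) i j|
     <= (Num.sqrt dQK%:R)^-1 * (M * M).
Proof.
move=> X1 WQ_le WK_le.
have row_bound (W : 'M[R]_(d, dQK)) i : opnorm2 W <= M -> rowdot (X *m W) i i <= M * M.
  move=> W_le; have XWi_le : vnorm (row i (X *m W)) <= M.
    rewrite row_mul; apply: le_trans W_le; apply: vnorm_mulmx_le_opnorm2.
    by rewrite vnorm_row X1 sqrtr1.
  rewrite vnorm_row in XWi_le; have s_ge0 := sqrtr_ge0 (rowdot (X *m W) i i).
  rewrite -(sqr_sqrtr (rowdot_diag_ge0 _ i)); nra.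
move=> i j; rewrite !mxE normrM ger0_norm ?invr_ge0 ?sqrtr_ge0 //.
rewrite ler_wpM2l ?invr_ge0 ?sqrtr_ge0 //.
under eq_bigr do rewrite [_^T _ _]mxE.
have := normr_dot_le (fun l => (X *m WQ) i l) (fun l => (X *m WK) j l).
rewrite -/(rowdot (X *m WQ) i i) -/(rowdot (X *m WK) j j).
have := row_bound WQ i WQ_le; have := row_bound WK j WK_le; lra.
Qed.

Section LayerNormStep.
Variables (R : realType) (N d : nat) (A : 'M[R]_N) (X : 'M[R]_(N, d)) (W : 'M[R]_d).
Hypotheses (W_orth : W *m W^T = 1%:M) (A_stoch : stochastic A)
  (A_diag_gt0 : forall i, 0 < A i i)
  (X_unit : forall i, rowdot X i i = 1) (X_gram_ge0 : forall i k, 0 <= rowdot X i k).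

Definition layernorm m n (Y : 'M[R]_(m, n)) : 'M[R]_(m, n) :=
  diag_mx (\row_i (vnorm (row i Y))^-1) *m Y.

Let Y := A *m X *m W.

Lemma rowdot_attn_step i k :
  rowdot Y i k = \sum_j \sum_l A i j * A k l * rowdot X j l.
Proof.
rewrite rowdot_gram.
have -> : Y *m Y^T = A *m (X *m X^T) *m A^T.
  by rewrite /Y !trmx_mul !mulmxA -(mulmxA (A *m X) W) W_orth mulmx1.
rewrite mxE exchange_big; apply: eq_bigr => l _.
rewrite [A^T l k]mxE [(A *m _) i l]mxE mulr_suml; apply: eq_bigr => j _.
by rewrite rowdot_gram; ring.
Qed.

Lemma rowdot_attn_step_ge0 i k : 0 <= rowdot Y i k.
Proof.
have [A_ge0 _] := A_stoch; rewrite rowdot_attn_step.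
by apply: sumr_ge0 => j _; apply: sumr_ge0 => l _; rewrite !mulr_ge0.
Qed.

Lemma rowdot_attn_step_diag_gt0 i : 0 < rowdot Y i i.
Proof.
have [A_ge0 _] := A_stoch.
apply: (@lt_le_trans _ _ (A i i * A i i * rowdot X i i)).
  by rewrite X_unit mulr1 mulr_gt0.
rewrite rowdot_attn_step; apply: (le_trans (y := \sum_l A i i * A i l * rowdot X i l)).
  apply: (ler_sum_term (F := fun l => A i i * A i l * rowdot X i l)) => l.
  by rewrite !mulr_ge0.
apply: (ler_sum_term (F := fun j => \sum_l A i j * A i l * rowdot X j l)) => j.
by apply: sumr_ge0 => l _; rewrite !mulr_ge0.
Qed.

Lemma rowdot_attn_step_diag_le1 i : rowdot Y i i <= 1.
Proof.
have [A_ge0 A_sum1] := A_stoch.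
rewrite rowdot_attn_step -(sum_row_products_eq1 i i A_sum1).
apply: ler_sum => j _; apply: ler_sum => l _.
by rewrite ler_piMr ?mulr_ge0 ?rowdot_le1.
Qed.

Lemma rowdot_layernorm i k :
  rowdot (layernorm Y) i k =
  (Num.sqrt (rowdot Y i i))^-1 * (Num.sqrt (rowdot Y k k))^-1 * rowdot Y i k.
Proof.
rewrite /rowdot /layernorm mul_diag_mx mulr_sumr; apply: eq_bigr => j _.
by rewrite !mxE -!vnorm_row; ring.
Qed.

Lemma layernorm_step_unit i : rowdot (layernorm Y) i i = 1.
Proof.
have Yi_gt0 := rowdot_attn_step_diag_gt0 i.
rewrite rowdot_layernorm -{3}(sqr_sqrtr (ltW Yi_gt0)) expr2.
by field; rewrite lt0r_neq0 ?sqrtr_gt0.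
Qed.

Lemma layernorm_step_gram_ge0 i k : 0 <= rowdot (layernorm Y) i k.
Proof.
by rewrite rowdot_layernorm !mulr_ge0 ?invr_ge0 ?sqrtr_ge0 ?rowdot_attn_step_ge0.
Qed.

Lemma layernorm_step_disagreement i k :
  1 - rowdot (layernorm Y) i k <= \sum_j \sum_l A i j * A k l * (1 - rowdot X j l).
Proof.
have [_ A_sum1] := A_stoch.
have -> : \sum_j \sum_l A i j * A k l * (1 - rowdot X j l) = 1 - rowdot Y i k.
  rewrite rowdot_attn_step -[X in _ = X - _](sum_row_products_eq1 i k A_sum1) -sumrB.
  by apply: eq_bigr => j _; rewrite -sumrB; apply: eq_bigr => l _; ring.
rewrite lerD2l lerN2 rowdot_layernorm -[leLHS]mul1r.
rewrite ler_wpM2r ?rowdot_attn_step_ge0 // -invfM invf_ge1 ?mulr_gt0 ?sqrtr_gt0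
  ?rowdot_attn_step_diag_gt0 //.
by rewrite -[1]mulr1 ler_pM ?sqrtr_ge0 // -sqrtr1 ler_wsqrtr ?rowdot_attn_step_diag_le1.
Qed.

End LayerNormStep.

Section Walks.
Variables (N : nat) (E : rel 'I_N).

Lemma walk0_eq c v : walk E c v 0 -> v = c.
Proof. by case=> -[|? ?] [] //= _ [_ <-]. Qed.

Lemma walkS_last c v m : walk E c v m.+1 -> exists2 j, walk E c j m & E j v.
Proof.
case=> p [sp [pp lp]]; case/lastP: p sp pp lp => [|p x] //.
rewrite size_rcons => -[sp]; rewrite rcons_path last_rcons => /andP[pp Ex] <-.
by exists (last c p) => //; exists p.
Qed.

Lemma walk_stall c v k n : E v v -> walk E c v k -> walk E c v (k + n).
Proof.
move=> Evv wk; elim: n => [|n [p [sp [pp lp]]]]; first by rewrite addn0.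
by exists (rcons p v); rewrite size_rcons sp addnS rcons_path pp lp Evv last_rcons.
Qed.

(* Shortest paths from a center are padded to length r with self-loops. *)
Lemma radius_center_walks r : (forall i, E i i) -> is_radius E r ->
  exists c, forall v, walk E c v r.
Proof.
move=> Eii [[c [c_center [ecc_le _]]] _]; exists c => v.
have [k wk] := c_center v.
have exP : exists k, `[< walk E c v k >] by exists k; apply/asboolP.
case: (ex_minnP exP) => m /asboolP wm m_min.
have m_le_r : (m <= r)%N.
  by apply: (ecc_le v); split=> // k' wk'; apply: m_min; apply/asboolP.
by rewrite -(subnKC m_le_r); apply: walk_stall.
Qed.

End Walks.

Section Consensus.
Variables (R : realType) (N : nat) (E : rel 'I_N).
Variables (S : nat -> 'I_N -> 'I_N -> R) (A : nat -> 'M[R]_N) (eps : R).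
Hypotheses (S_diag : forall t i, S t i i = 0)
  (S_step : forall t i k, S t.+1 i k <= \sum_j \sum_l A t i j * A t k l * S t j l)
  (A_stoch : forall t, stochastic (A t))
  (A_floor : forall t i j, E j i -> eps <= A t i j) (eps_ge0 : 0 <= eps).

Lemma disagreement_le_shift D t0 m i k :
  (forall i k, S t0 i k <= D) -> S (t0 + m)%N i k <= D.
Proof.
move=> S_le; elim: m i k => [|m IH] i k; first by rewrite addn0.
have [A_ge0 A_sum1] := A_stoch (t0 + m)%N.
rewrite addnS; apply: (le_trans (S_step _ i k)).
rewrite -[leRHS]mul1r -(sum_row_products_eq1 i k A_sum1) mulr_suml.
apply: ler_sum => j _; rewrite mulr_suml; apply: ler_sum => l _.
by rewrite ler_wpM2l ?mulr_ge0.
Qed.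

(* Each step, the pair (i, k) inherits at least eps^2 of the slack D - S at the
   pair of predecessors (j, l) on the walks from c. *)
Lemma disagreement_walk c D t0 m i k :
  (forall i k, S t0 i k <= D) -> walk E c i m -> walk E c k m ->
  S (t0 + m)%N i k <= (1 - eps ^+ (2 * m)) * D.
Proof.
move=> S_le; elim: m i k => [|m IH] i k wi wk.
  by rewrite (walk0_eq wi) (walk0_eq wk) addn0 S_diag muln0 expr0 subrr mul0r.
have [j wj Eji] := walkS_last wi; have [l wl Elk] := walkS_last wk.
have D_ge0 : 0 <= D by rewrite -(S_diag t0 i) S_le.
set t := (t0 + m)%N; have [A_ge0 A_sum1] := A_stoch t.
have S_le_t a b : S t a b <= D by apply: disagreement_le_shift.
pose slack a b := A t i a * A t k b * (D - S t a b).
have slack_ge0 a b : 0 <= slack a b by rewrite !mulr_ge0 ?subr_ge0.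
have avg : \sum_a \sum_b A t i a * A t k b * S t a b = D - \sum_a \sum_b slack a b.
  rewrite -[X in X - _]mul1r -(sum_row_products_eq1 i k A_sum1) mulr_suml -sumrB.
  apply: eq_bigr => a _; rewrite mulr_suml -sumrB.
  by apply: eq_bigr => b _; rewrite /slack; ring.
have slack_jl : slack j l <= \sum_a \sum_b slack a b.
  apply: (le_trans (ler_sum_term (F := slack j) l (slack_ge0 j))).
  by apply: (ler_sum_term (F := fun a => \sum_b slack a b)) => a; apply: sumr_ge0.
have eps2 : eps * eps <= A t i j * A t k l by rewrite ler_pM ?A_floor.
have pow_ge0 : 0 <= eps ^+ (2 * m) by rewrite exprn_ge0.
have slack_ge : eps * eps * (eps ^+ (2 * m) * D) <= slack j l.
  rewrite /slack ler_pM ?mulr_ge0 //; have := IH j l wj wl; lra.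
rewrite addnS; apply: (le_trans (S_step _ i k)); rewrite -/t avg.
have -> : eps ^+ (2 * m.+1) = eps * eps * eps ^+ (2 * m) by rewrite mulnS !exprS mulrA.
lra.
Qed.

Lemma disagreement_radius r D t0 i k : (forall i, E i i) -> is_radius E r ->
  (forall i k, S t0 i k <= D) -> S (t0 + r)%N i k <= (1 - eps ^+ (2 * r)) * D.
Proof.
move=> Eii Er S_le; have [c c_walks] := radius_center_walks Eii Er.
exact: disagreement_walk.
Qed.

Lemma disagreement_geometric r t i k : (forall i, E i i) -> is_radius E r ->
  (forall i k, S 0 i k <= 1) -> S t i k <= (1 - eps ^+ (2 * r)) ^+ (t %/ r).
Proof.
move=> Eii Er S0_le1.
have S_period n a b : S (n * r)%N a b <= (1 - eps ^+ (2 * r)) ^+ n.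
  elim: n a b => [|n IH] a b; first by rewrite mul0n expr0.
  by rewrite mulSn addnC exprS; apply: disagreement_radius.
by rewrite {1}(divn_eq t r); apply: disagreement_le_shift; apply: S_period.
Qed.

End Consensus.

Section Dynamics.
Variables (R : realType) (N d dQK : nat) (E : rel 'I_N) (M : R).
Variables (WQ WK : nat -> 'M[R]_(d, dQK)) (WV : nat -> 'M[R]_d) (X : nat -> 'M[R]_(N, d)).
Hypotheses (E_refl : forall i, E i i)
  (W_bound : forall t, opnorm2 (WQ t) <= M /\ opnorm2 (WK t) <= M)
  (WV_orth : forall t, WV t *m (WV t)^T = 1%:M)
  (X_step : forall t, X t.+1 = sa_ln_step E (X t) (WQ t) (WK t) (WV t))
  (X0_unit : forall i, vnorm (row i (X 0%N)) = 1)
  (X0_gram_ge0 : forall i j, 0 <= rowdot (X 0%N) i j).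

Local Notation A t := (attn E (X t) (WQ t) (WK t)).

Definition attn_floor : R :=
  let B := (Num.sqrt dQK%:R)^-1 * (M * M) in expR (- (B + B)) / N%:R.

Lemma attn_floor_gt0 : (0 < N)%N -> 0 < attn_floor.
Proof. by move=> N_gt0; rewrite divr_gt0 ?expR_gt0 ?ltr0n. Qed.

Lemma natr_mul_attn_floor_le1 : (0 < N)%N -> N%:R * attn_floor <= 1.
Proof.
move=> N_gt0; have B_ge0 : 0 <= (Num.sqrt dQK%:R)^-1 * (M * M).
  by rewrite mulr_ge0 ?invr_ge0 ?sqrtr_ge0 // -expr2 sqr_ge0.
rewrite /attn_floor mulrC divfK ?pnatr_eq0 -?lt0n //.
by rewrite -[leRHS]expR0 ler_expR oppr_le0 addr_ge0.
Qed.

Lemma attn_ge_floor t i j :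
  (forall i, rowdot (X t) i i = 1) -> E j i -> attn_floor <= A t i j.
Proof.
move=> Xt_unit; have [WQ_le WK_le] := W_bound t.
exact/softmaxG_floor/(attn_score_bound Xt_unit WQ_le WK_le).
Qed.

Lemma attn_diag_gt0 t i : (forall i, rowdot (X t) i i = 1) -> 0 < A t i i.
Proof.
move=> Xt_unit; apply: lt_le_trans (attn_ge_floor Xt_unit (E_refl i)).
by rewrite attn_floor_gt0 // (leq_ltn_trans _ (ltn_ord i)).
Qed.

Lemma dynamics_gram t :
  (forall i, rowdot (X t) i i = 1) /\ (forall i k, 0 <= rowdot (X t) i k).
Proof.
elim: t => [|t [Xt_unit Xt_ge0]].
  by split=> // i; apply: sqrtr_eq1; rewrite -vnorm_row.
have A_diag_gt0 i := attn_diag_gt0 i Xt_unit.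
rewrite X_step; split=> [i|i k].
  exact: (layernorm_step_unit (WV_orth t) (softmaxG_stochastic _ E_refl)).
exact: (layernorm_step_gram_ge0 (WV_orth t) (softmaxG_stochastic _ E_refl)).
Qed.

Lemma dynamics_disagreement_le1 t i k : 1 - rowdot (X t) i k <= 1.
Proof. by rewrite lerBlDr lerDl; apply: (dynamics_gram t).2. Qed.

Section Contraction.
Variable eps : R.
Hypotheses (eps_ge0 : 0 <= eps) (eps_le_floor : eps <= attn_floor).

Let S t i k := 1 - rowdot (X t) i k.

Let S_diag t i : S t i i = 0.
Proof. by rewrite /S (dynamics_gram t).1 subrr. Qed.

Let S_step t i k : S t.+1 i k <= \sum_j \sum_l A t i j * A t k l * S t j l.
Proof.
have [Xt_unit Xt_ge0] := dynamics_gram t.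
have A_diag_gt0 i' := attn_diag_gt0 i' Xt_unit.
rewrite /S X_step.
exact: (layernorm_step_disagreement (WV_orth t) (softmaxG_stochastic _ E_refl)).
Qed.

Let A_floor t i j : E j i -> eps <= A t i j.
Proof.
move=> Eji; apply: le_trans eps_le_floor (attn_ge_floor _ Eji).
exact: (dynamics_gram t).1.
Qed.

Lemma dynamics_disagreement_geometric r t i k : is_radius E r ->
  1 - rowdot (X t) i k <= (1 - eps ^+ (2 * r)) ^+ (t %/ r).
Proof.
move=> Er; apply: (disagreement_geometric (S := S) S_diag S_step _ A_floor) => //.
  by move=> t'; apply: softmaxG_stochastic.
exact: dynamics_disagreement_le1.
Qed.

End Contraction.
End Dynamics.

Lemma sum_sq_centered (R : realType) N (x : 'I_N -> R) : (0 < N)%N ->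
  \sum_i (x i - (\sum_k x k) / N%:R) ^+ 2 =
  \sum_i x i * x i - (\sum_i \sum_k x i * x k) / N%:R.
Proof.
move=> N_gt0; have N_neq0 : (N%:R : R) != 0 by rewrite pnatr_eq0 -lt0n.
set s := \sum_k x k.
have -> : \sum_i \sum_k x i * x k = s * s.
  by rewrite mulr_suml; apply: eq_bigr => i _; rewrite mulr_sumr.
rewrite (eq_bigr (fun i => x i * x i - 2 * s / N%:R * x i + s ^+ 2 / N%:R ^+ 2));
  last by move=> i _; field.
rewrite big_split sumrB /= -mulr_sumr sumr_const card_ord -/s -[_ *+ N]mulr_natr.
by field.
Qed.

Lemma mu_le_disagreement (R : realType) N d (X : 'M[R]_(N, d)) D : (0 < N)%N ->
  (forall i, rowdot X i i = 1) -> (forall i k, 1 - rowdot X i k <= D) ->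
  mu X <= Num.sqrt (N%:R * D).
Proof.
move=> N_gt0 X_unit X_le; have N_pos : (0 : R) < N%:R by rewrite ltr0n.
rewrite /mu; apply: ler_wsqrtr; rewrite exchange_big /=.
under eq_bigr => j _ do rewrite sum_sq_centered //.
rewrite sumrB -mulr_suml.
have -> : \sum_j \sum_i X i j * X i j = \sum_i rowdot X i i by rewrite exchange_big.
have -> : \sum_j \sum_i \sum_k X i j * X k j = \sum_i \sum_k rowdot X i k.
  by rewrite exchange_big; apply: eq_bigr => i _; rewrite exchange_big.
under eq_bigr do rewrite X_unit.
rewrite sumr_const card_ord; set G := \sum_i \sum_k rowdot X i k.
have sum_le : \sum_(i < N) \sum_(k < N) (1 - rowdot X i k) <= \sum_(i < N) \sum_(k < N) D.
  by apply: ler_sum => i _; apply: ler_sum => k _.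
have sum_disagreement : \sum_(i < N) \sum_(k < N) (1 - rowdot X i k) = N%:R * N%:R - G.
  rewrite (eq_bigr (fun i => N%:R - \sum_k rowdot X i k)); last first.
    by move=> i _; rewrite sumrB sumr_const card_ord.
  by rewrite sumrB sumr_const card_ord mulr_natr.
have sum_D : \sum_(i < N) \sum_(k < N) D = N%:R * (N%:R * D).
  rewrite (eq_bigr (fun _ => N%:R * D)); last first.
    by move=> i _; rewrite sumr_const card_ord mulr_natl.
  by rewrite sumr_const card_ord -[_ *+ N]mulr_natl.
rewrite sum_disagreement sum_D in sum_le.
have -> : N%:R - G / N%:R = (N%:R * N%:R - G) / N%:R by field; exact: lt0r_neq0.
rewrite ler_pdivrMr //; nra.
Qed.

(* q^(t %/ r) <= q^(t / r - 1) since t / r < t %/ r + 1; the square root halves the exponent. *)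
Lemma sqrt_expr_divn_le_powR (R : realType) N (q : R) r t :
  0 < q -> q < 1 -> (0 < r)%N -> (0 < N)%N ->
  Num.sqrt (N%:R * q ^+ (t %/ r)) <= Num.sqrt (N%:R / q) * powR q (t%:R / (2 * r)%:R).
Proof.
move=> q_gt0 q_lt1 r_gt0 N_gt0; have N_pos : (0 : R) < N%:R by rewrite ltr0n.
set n := (t %/ r)%N; set y := powR q _; have y_ge0 : 0 <= y by apply: powR_ge0.
have y2 : y ^+ 2 = expR (t%:R / r%:R * ln q).
  rewrite /y /powR (negbTE (lt0r_neq0 q_gt0)) -expRM_natl; congr expR.
  by rewrite natrM; field; rewrite pnatr_eq0 -lt0n r_gt0.
have qn : q ^+ n.+1 = expR (n.+1%:R * ln q).
  by rewrite -[LHS](lnK (x := q ^+ n.+1)) ?lnXn // ?mulr_natl // posrE exprn_gt0.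
have qn_le : q ^+ n.+1 <= y ^+ 2.
  rewrite qn y2 ler_expR; apply: ler_wnM2r; first by rewrite ln_le0 // ltW.
  by rewrite ler_pdivrMr ?ltr0n // -natrM ler_nat ltnW // /n ltn_ceil.
rewrite -[y]ger0_norm // -sqrtr_sqr -sqrtrM; last by rewrite divr_ge0 // ltW.
apply: ler_wsqrtr; apply: (@le_trans _ _ (N%:R / q * q ^+ n.+1)).
  by rewrite exprS mulrA divfK ?lt0r_neq0.
by rewrite ler_pM2l ?divr_gt0.
Qed.

Theorem corollary1 (R : realType) (N d dQK : nat) (E : rel 'I_N) (r : nat)
  (WQ WK : nat -> 'M[R]_(d, dQK)) (WV : nat -> 'M[R]_d)
  (X : nat -> 'M[R]_(N, d)) :
  (0 < dQK)%N ->
  (forall i, vnorm (row i (X 0%N)) = 1) ->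
  (forall t, X t.+1 = sa_ln_step E (X t) (WQ t) (WK t) (WV t)) ->
  quasi_strongly_connected E -> is_radius E r ->
  (forall i, E i i) ->
  (exists M : R, forall t, opnorm2 (WQ t) <= M /\ opnorm2 (WK t) <= M) ->
  (forall t, WV t *m (WV t)^T = 1%:M) ->
  (forall i j, 0 <= rowdot (X 0%N) i j) ->
  exists C eps : R, 0 < C /\ 0 < eps /\ N%:R * eps < 1 /\
    forall t : nat, mu (X t) <= C * powR (1 - eps ^+ (2 * r)) (t%:R / (2 * r)%:R).
Proof.
move=> _ X0_unit X_step _ E_radius E_refl [M W_bound] WV_orth X0_gram_ge0.
have N_gt0 : (0 < N)%N by case: E_radius => -[c _] _; apply: leq_ltn_trans (ltn_ord c).
have floor_gt0 := attn_floor_gt0 dQK M N_gt0.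
pose eps := attn_floor N dQK M / 2.
have eps_gt0 : 0 < eps by rewrite divr_gt0.
have eps_le_floor : eps <= attn_floor N dQK M by rewrite /eps; lra.
have Neps_lt1 : N%:R * eps < 1.
  by have := natr_mul_attn_floor_le1 dQK M N_gt0; rewrite /eps mulrA; lra.
have X_unit t := (dynamics_gram E_refl W_bound WV_orth X_step X0_unit X0_gram_ge0 t).1.
have [r_eq0|r_gt0] := posnP r.
  exists 1, eps; do 2!split=> //; split=> // t; rewrite mul1r.
  apply: le_trans (mu_le_disagreement (D := 0) N_gt0 (X_unit t) _) _; last first.
    by rewrite mulr0 sqrtr0 powR_ge0.
  have [c c_walks] := radius_center_walks E_refl E_radius; rewrite r_eq0 in c_walks.
  by move=> i k; rewrite (walk0_eq (c_walks i)) (walk0_eq (c_walks k)) X_unit subrr.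
have eps_lt1 : eps < 1.
  by apply: le_lt_trans Neps_lt1; rewrite ler_peMl ?(ltW eps_gt0) // ler1n.
set q := 1 - eps ^+ (2 * r).
have q_gt0 : 0 < q by rewrite subr_gt0 expr_lt1 ?(ltW eps_gt0) // muln_gt0.
have q_lt1 : q < 1 by rewrite ltrBlDr ltrDl exprn_gt0.
exists (Num.sqrt (N%:R / q)), eps; split; first by rewrite sqrtr_gt0 divr_gt0 ?ltr0n.
do 2!split=> //; move=> t.
apply: le_trans (sqrt_expr_divn_le_powR t q_gt0 q_lt1 r_gt0 N_gt0).
apply: mu_le_disagreement => // i k.
exact: (dynamics_disagreement_geometric E_refl W_bound WV_orth X_step X0_unit X0_gram_ge0
  (ltW eps_gt0) eps_le_floor).
Qed.
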